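(* Let $p \geq 1$ and $N\in\mathbb{N}$. Let $\mu_1$ and $\mu_2$ be two permutation invariant Radon probability measures on $\mathbb{R}^N$ whose $p$:th moments are finite. Let $I\subset[N]$. If $f:\mathbb{R}^{|I|}\to\mathbb{R}$ is a bounded $1$-Lipschitz function with respect to the $\|\cdot\|_p$ norm, then \[ \left|\langle f\circ P_I\rangle_{\mu_1}-\langle f\circ P_I\rangle_{\mu_2}\right| \leq \left(\frac{|I|}{1-\frac{|I|}{N}}\right)^{1/p} w_p(\mu_1,\mu_2;N). \]
   Context: $[N]=\{1,\dots,N\}$ and $S_N$ is its permutation group. For $\pi\in S_N$, $Q_\pi:\mathbb{R}^N\to\mathbb{R}^N$ is $(Q_\pi x)_j=x_{\pi^{-1}(j)}$. A probability measure $\mu$ on $\mathbb{R}^N$ is permutation invariant if for every integrable $f$ and $\pi\in S_N$, $f\circ Q_\pi$ is integrable and $\langle f\circ Q_\pi\rangle_\mu=\langle f\rangle_\mu$. For $I\subset[N]$ with $n=|I|$, let $\pi_I:I\to[n]$ be the unique order-preserving bijection; $P_I:\mathbb{R}^N\to\mathbb{R}^n$ is $(P_Ix)_j=x_{\pi_I^{-1}(j)}$. The specific $p$-norm fluctuation distance is $w_p(\mu_1,\mu_2;N)=\left(\inf_\gamma\int\gamma(dx,dy)\frac1N\sum_{i=1}^N|x_i-y_i|^p\right)^{1/p}$, the infimum over all couplings $\gamma$ of $\mu_1,\mu_2$ (probability measures on $\mathbb{R}^N\times\mathbb{R}^N$ with marginals $\mu_1$ and $\mu_2$). A function is $1$-Lipschitz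 w.r.t. $\|\cdot\|_p$ if $|f(\phi)-f(\psi)|\le\|\phi-\psi\|_p$ for all $\phi,\psi$. *)

From HB Require Import structures.
From mathcomp Require Import all_boot all_order all_algebra all_fingroup.
From mathcomp Require Import all_classical all_reals all_analysis.
Set Implicit Arguments. Unset Strict Implicit. Unset Printing Implicit Defensive.
Import Order.TTheory GRing.Theory Num.Theory.
Local Open Scope classical_set_scope.
Local Open Scope ring_scope.

(* R^N is represented by N.-tuple R, with the product (= Borel) sigma-algebra
   of mathcomp-analysis (generated by the coordinate maps); coordinate i of x
   is tnth x i, indices are 'I_N = {0,...,N-1} (standing for [N]). *)

Definition Qperm (R : Type) (N : nat) (s : 'S_N) (x : N.-tuple R) : N.-tuple R :=
  [tuple tnth x ((s^-1)%g j) | j < N].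

(* (P_I x)_j = x_{pi_I^{-1}(j)}, pi_I : I -> [n] the order preserving bijection:
   enum_val j is the j-th element (0-based) of I listed in increasing order. *)
Definition PI (R : Type) (N : nat) (I : {set 'I_N}) (x : N.-tuple R)
  : #|I|.-tuple R :=
  [tuple tnth x (enum_val j) | j < #|I|].

Definition perm_invariant (R : realType) (N : nat)
    (mu : probability (N.-tuple R) R) : Prop :=
  forall (s : 'S_N) (f : N.-tuple R -> \bar R),
    mu.-integrable setT f ->
    mu.-integrable setT (f \o Qperm s) /\
    (\int[mu]_x (f \o Qperm s) x = \int[mu]_x f x)%E.

Definition finite_pmoment (R : realType) (N : nat) (p : R)
    (mu : probability (N.-tuple R) R) : Prop :=
  mu.-integrable setT (fun x : N.-tuple R => (\sum_(i < N) `|tnth x i| `^ p)%:E).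

Definition pdist (R : realType) (n : nat) (p : R) (x y : n.-tuple R) : R :=
  (\sum_(i < n) `|tnth x i - tnth y i| `^ p) `^ p^-1.

Definition lipschitz1_p (R : realType) (n : nat) (p : R) (f : n.-tuple R -> R)
  : Prop := forall x y : n.-tuple R, `|f x - f y| <= pdist p x y.

Definition is_coupling (R : realType) (N : nat)
    (mu1 mu2 : probability (N.-tuple R) R)
    (g : probability (N.-tuple R * N.-tuple R)%type R) : Prop :=
  pushforward g fst = mu1 /\ pushforward g snd = mu2.

Definition wp (R : realType) (N : nat) (p : R)
    (mu1 mu2 : probability (N.-tuple R) R) : \bar R :=
  ((ereal_inf [set (\int[g]_z
       ((N%:R)^-1 * \sum_(i < N) `|tnth z.1 i - tnth z.2 i| `^ p)%:E)%E
     | g in [set g | is_coupling mu1 mu2 g]]) `^ p^-1)%E.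

From HB Require Import structures.
From mathcomp Require Import all_boot all_order all_algebra all_fingroup.
From mathcomp Require Import all_classical all_reals all_analysis.
From mathcomp Require Import ring lra measurable_realfun.
Set Implicit Arguments. Unset Strict Implicit. Unset Printing Implicit Defensive.
Import Order.TTheory GRing.Theory Num.Theory.
Local Open Scope classical_set_scope.
Local Open Scope ring_scope.

(* Fix a coupling g of mu1 and mu2 and a permutation s. Permutation invariance
   lets us replace f o P_I by f o P_I o Q_s under both marginals, so the
   Lipschitz bound gives |<f o P_I>_1 - <f o P_I>_2| <= E_g[D_s^(1/p)], where D_s
   is the sum of |z1_k - z2_k|^p over the coordinates k in s^-1(I).  The concave
   map t |-> t^(1/p) lies below each of its tangent lines, which are affine, and
   the average of D_s over all s is |I| times the integrand of w_p.  Hence the gap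
   m satisfies m <= T(|I| E_g[cost]) for every tangent line T, i.e.
   m^p <= |I| E_g[cost].  Taking the infimum over couplings gives the bound with
   the constant |I|^(1/p), which is at most the one claimed. *)

Lemma sum_perm_eval (T : finType) (V : nmodType) (a : T -> V) (x : T) :
  (\sum_(s : {perm T}) a (s x)) *+ #|T| = (\sum_y a y) *+ #|{perm T}|.
Proof.
have eval_indep y : \sum_(s : {perm T}) a (s y) = \sum_(s : {perm T}) a (s x).
  rewrite (reindex_inj (mulgI (tperm x y))).
  by apply: eq_bigr => s _; rewrite permM tpermR.
rewrite -sumr_const -(eq_bigr _ (fun y _ => eval_indep y)) exchange_big /=.
rewrite -sumr_const; apply: eq_bigr => s _.
by rewrite [RHS](reindex_inj (@perm_inj _ s)).
Qed.

Lemma sum_perm_inv_eval (R : numFieldType) (T : finType) (a : T -> R) (x : T) :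
  \sum_(s : {perm T}) a ((s^-1)%g x) = #|{perm T}|%:R * (#|T|%:R^-1 * \sum_y a y).
Proof.
have T0 : #|T|%:R != 0 :> R by rewrite pnatr_eq0 -lt0n; apply/card_gt0P; exists x.
have -> : \sum_(s : {perm T}) a ((s^-1)%g x) = \sum_(s : {perm T}) a (s x).
  by rewrite (reindex_inj invg_inj); apply: eq_bigr => s _; rewrite invgK.
apply: (mulIf T0); rewrite mulr_natr sum_perm_eval -mulr_natr.
by rewrite -mulr_natl; field.
Qed.

Section root_tangent.
Context {R : realType}.
Implicit Types p l D a m : R.

(* The tangent line at [l] of the concave map [D |-> D `^ p^-1]. *)
Definition root_tangent p l D : R := l `^ p^-1 * (D / (p * l) + (1 - p^-1)).

Lemma root_tangent_ge0 p l D : 1 <= p -> 0 < l -> 0 <= D -> 0 <= root_tangent p l D.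
Proof.
move=> p1 l0 D0; have p0 : 0 < p by apply: lt_le_trans p1.
rewrite mulr_ge0 ?powR_ge0 // addr_ge0 ?divr_ge0 ?mulr_ge0 ?(ltW p0) ?(ltW l0) //.
by rewrite subr_ge0 invf_le1.
Qed.

Lemma powR_inv_le_root_tangent p l D : 1 <= p -> 0 < l -> 0 <= D ->
  D `^ p^-1 <= root_tangent p l D.
Proof.
move=> p1 l0 D0; have p0 : 0 < p by apply: lt_le_trans p1.
have [->|pn1] := eqVneq p 1.
  rewrite /root_tangent invr1 !powRr1 ?(ltW l0)// subrr addr0 mul1r.
  by rewrite mulrC divfK ?gt_eqF.
have ip1 : p^-1 < 1 by rewrite invf_lt1 // lt_neqAle eq_sym pn1.
pose q := (1 - p^-1)^-1.
have q0 : 0 < q by rewrite invr_gt0 subr_gt0.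
have pq : p^-1 + q^-1 = 1 by rewrite /q invrK addrC subrK.
have Dl0 : 0 <= D / l by rewrite divr_ge0 // ltW.
(* Young's inequality with [u = (D / l)^(1/p)] and [v = 1]. *)
have := conjugate_powR (powR_ge0 (D / l) p^-1) ler01 p0 q0 pq.
rewrite mulr1 powR1 -powRrM mulVf ?gt_eqF // powRr1 // => young.
have eD : D = l * (D / l) by rewrite mulrC divfK ?gt_eqF.
rewrite {1}eD powRM // ?(ltW l0) // /root_tangent ler_wpM2l ?powR_ge0 //.
apply: le_trans young _.
by rewrite /q invrK mul1r lerD2r invfM mulrA mulrAC.
Qed.

Lemma powR_le_of_root_tangent p a m : 1 <= p -> 0 <= a -> 0 <= m ->
  (forall l, 0 < l -> m <= root_tangent p l a) -> m `^ p <= a.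
Proof.
move=> p1 a0 m0 tangent_bound; have p0 : 0 < p by apply: lt_le_trans p1.
apply/ler_addgt0Pr => e e0.
have ae0 : 0 < a + e by apply: (lt_le_trans e0); rewrite lerDr.
have slope_le1 : a / (p * (a + e)) + (1 - p^-1) <= 1.
  rewrite invfM mulrCA -[X in _ <= X](subrK p^-1) addrC lerD2l.
  rewrite -[X in _ <= X]mulr1 ler_wpM2l ?invr_ge0 ?(ltW p0) //.
  by rewrite ler_pdivrMr // mul1r lerDl ltW.
have : m <= (a + e) `^ p^-1.
  apply: le_trans (tangent_bound _ ae0) _.
  by rewrite -[X in _ <= X]mulr1 ler_wpM2l ?powR_ge0.
move/(ge0_ler_powR (ltW p0) m0 (powR_ge0 _ _)).
by rewrite -powRrM mulVf ?gt_eqF // powRr1 // ltW.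
Qed.

Lemma sum_root_tangent (S : finType) p l (d : S -> R) D :
  \sum_s d s = #|S|%:R * D ->
  \sum_s root_tangent p l (d s) = #|S|%:R * root_tangent p l D.
Proof.
move=> sum_d; rewrite /root_tangent -mulr_sumr big_split /= -mulr_suml sum_d.
by rewrite sumr_const -mulr_natl; ring.
Qed.

End root_tangent.

Section measurability.
Context {R : realType}.

Lemma measurable_sum_powR_dist d (T : measurableType d) k (p : R)
    (u v : 'I_k -> T -> R) :
  (forall i, measurable_fun setT (u i)) -> (forall i, measurable_fun setT (v i)) ->
  measurable_fun setT (fun t => \sum_(i < k) `|u i t - v i t| `^ p).
Proof.
move=> mu mv; apply: measurable_sum => i.
apply: (measurableT_comp (measurable_powR _)).
apply: measurableT_comp; first exact: normr_measurable.
exact: measurable_funB.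
Qed.

Lemma measurable_pdist_l n (p : R) (y : n.-tuple R) :
  measurable_fun setT (fun x : n.-tuple R => pdist p x y).
Proof.
apply: (measurableT_comp (measurable_powR _)).
apply: (@measurable_sum_powR_dist _ _ n p (fun i x => tnth x i) (fun i _ => tnth y i)).
  exact: measurable_tnth.
by move=> i; exact: measurable_cst.
Qed.

Lemma measurable_PI N (I : {set 'I_N}) : measurable_fun setT (@PI R N I).
Proof.
apply/measurable_fun_tnthP => i.
rewrite (_ : _ \o _ = (fun x : N.-tuple R => tnth x (enum_val i))); first exact: measurable_tnth.
by apply: funext => x /=; rewrite tnth_mktuple.
Qed.

Lemma measurable_Qperm N (s : 'S_N) : measurable_fun setT (@Qperm R N s).
Proof.
apply/measurable_fun_tnthP => i.
rewrite (_ : _ \o _ = (fun x : N.-tuple R => tnth x ((s^-1)%g i))); first exact: measurable_tnth.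
by apply: funext => x /=; rewrite tnth_mktuple.
Qed.

Lemma measurable_root_tangent d (T : measurableType d) (p l : R) (h : T -> R) :
  measurable_fun setT h -> measurable_fun setT (fun t => root_tangent p l (h t)).
Proof.
move=> mh; apply: measurable_funM; first exact: measurable_cst.
by apply: measurable_funD; [apply: measurable_funM | exact: measurable_cst].
Qed.

End measurability.

Section lipschitz_measurable.
Context {R : realType} {n : nat}.
Variable p : R.
Hypothesis p0 : 0 < p.

Lemma pdistC (x y : n.-tuple R) : pdist p x y = pdist p y x.
Proof. by rewrite /pdist; under eq_bigr do rewrite distrC. Qed.

Lemma pdist_small (eps : R) : 0 < eps -> exists2 delta : R, 0 < delta &
  forall x y : n.-tuple R, (forall i, `|tnth x i - tnth y i| < delta) -> pdist p x y < eps.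
Proof.
move=> eps0; have epsp0 : 0 < eps `^ p / n.+1%:R by rewrite divr_gt0 ?powR_gt0.
exists ((eps `^ p / n.+1%:R) `^ p^-1); first exact: powR_gt0.
move=> x y close.
have close_p i : `|tnth x i - tnth y i| `^ p < eps `^ p / n.+1%:R.
  have := gt0_ltr_powR p0 (normr_ge0 _) (powR_ge0 _ _) (close i).
  by rewrite -powRrM mulVf ?gt_eqF // powRr1 // ltW.
have sum_lt : \sum_(i < n) `|tnth x i - tnth y i| `^ p < eps `^ p.
  apply: (le_lt_trans (y := n%:R * (eps `^ p / n.+1%:R))).
    rewrite mulr_natl -[X in _ *+ X](card_ord n) -sumr_const.
    by apply: ler_sum => i _; exact: ltW.
  by rewrite mulrCA gtr_pMr ?powR_gt0 // ltr_pdivrMr ?ltr0n // mul1r ltr_nat.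
have ip0 : 0 < p^-1 by rewrite invr_gt0.
have := gt0_ltr_powR ip0 (sumr_ge0 _ (fun i _ => powR_ge0 _ _)) (powR_ge0 _ _) sum_lt.
by rewrite -powRrM mulfV ?gt_eqF // powRr1 // ltW.
Qed.

(* Onto the tuples with rational coordinates: [k] decodes to a denominator and
   an integer tuple. *)
Definition rat_tuple (k : nat) : n.-tuple R :=
  if (unpickle k : option (nat * n.-tuple int)) is Some (m, z)
  then [tuple (tnth z i)%:~R / m.+1%:R | i < n] else [tuple 0 | _ < n].

Lemma rat_tuple_dense (x : n.-tuple R) (eps : R) : 0 < eps ->
  exists k, pdist p x (rat_tuple k) < eps.
Proof.
move=> /pdist_small[d d0 small].
pose m := Num.bound d^-1.
have dm : d^-1 < m%:R by apply: archi_boundP; rewrite invr_ge0 ltW.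
pose z := [tuple Num.floor (tnth x i * m.+1%:R) | i < n].
exists (pickle (m, z)); apply: small => i; rewrite /rat_tuple pickleK !tnth_mktuple.
set M := m.+1%:R : R; have M0 : 0 < M by rewrite ltr0n.
set y := tnth x i * M.
have -> : tnth x i = y / M by rewrite /y mulfK ?gt_eqF.
rewrite -mulrBl normrM [`|M^-1|]ger0_norm ?invr_ge0 ?ltW //.
rewrite ger0_norm ?subr_ge0 ?real_floor_le ?num_real //.
have floor_gap : y - (Num.floor y)%:~R < 1.
  by rewrite ltrBlDl -intrD1 real_floorD1_gt ?num_real.
apply: (lt_le_trans (y := M^-1)); first by rewrite ltr_pdivrMr // mulVf ?gt_eqF.
rewrite -[X in _ <= X]invrK lef_pV2 ?posrE ?invr_gt0 //.
by apply: le_trans (ltW dm) _; rewrite ler_nat.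
Qed.

(* [f] is the pointwise infimum of the countably many measurable functions
   [x |-> f q + pdist p x q], [q] rational. *)
Lemma lipschitz1_p_measurable (f : n.-tuple R -> R) :
  lipschitz1_p p f -> measurable_fun setT f.
Proof.
move=> f_lip.
pose u x k := f (rat_tuple k) + pdist p x (rat_tuple k).
have f_le_u x k : f x <= u x k.
  by rewrite /u -lerBlDl; apply: le_trans (f_lip _ _); exact: ler_norm.
have u_lb x : has_lbound (range (u x)) by exists (f x) => _ [k _ <-].
suff -> : f = fun x => infs (u x) 0.
  apply: measurable_fun_infs => [x _|k]; first exact: u_lb.
  by apply: measurable_funD; [exact: measurable_cst | exact: measurable_pdist_l].
apply: funext => x; apply/le_anti/andP; split.
  by apply: lb_le_inf => [|_ [k _ <-]]; [exists (u x 0%N), 0%N | exact: f_le_u].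
apply/ler_addgt0Pr => e e0.
have [k near_k] : exists k, pdist p x (rat_tuple k) < e / 2.
  by apply: rat_tuple_dense; rewrite divr_gt0.
apply: (le_trans (y := u x k)).
  by apply: ge_inf; [exists (f x) => _ [k' _ <-] | exists k].
have f_k_le : f (rat_tuple k) - f x <= pdist p x (rat_tuple k).
  by rewrite pdistC; apply: le_trans (f_lip _ _); exact: ler_norm.
rewrite /u; lra.
Qed.

End lipschitz_measurable.

Section probability_integral.
Context {R : realType} {d : measure_display} {T : measurableType d}.
Implicit Types (P : probability T R) (h : T -> R).

Lemma bounded_probability_integrable P {h} :
  measurable_fun setT h -> (exists M : R, forall x, `|h x| <= M) ->
  P.-integrable setT (EFin \o h).
Proof.
move=> mh [M hM]; apply: measurable_bounded_integrable => //.
  by rewrite /= probability_setT ltry.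
exists M; split; first exact: num_real.
by move=> r Mr x _; apply: le_trans (hM x) _; exact: ltW.
Qed.

Lemma bounded_integral_fin_num P h :
  measurable_fun setT h -> (exists M : R, forall x, `|h x| <= M) ->
  (\int[P]_x (h x)%:E)%E \is a fin_num.
Proof.
move=> mh bh.
by have := integrable_fin_num measurableT (bounded_probability_integrable P mh bh).
Qed.

Lemma integral_pushforward_bounded {d'} {U : measurableType d'} P (phi : T -> U)
    (G : U -> R) :
  measurable_fun setT phi -> measurable_fun setT G ->
  (exists M : R, forall y, `|G y| <= M) ->
  (\int[pushforward P phi]_y (G y)%:E = \int[P]_x (G (phi x))%:E)%E.
Proof.
move=> mphi mG [M hM].
rewrite integral_pushforward //; first exact/measurable_EFinP.
rewrite preimage_setT; apply: (bounded_probability_integrable _ (h := G \o phi)).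
  exact: measurableT_comp.
by exists M => x; exact: hM.
Qed.

Lemma ge0_integral_affine P h (a b e : R) :
  measurable_fun setT h -> (forall x, 0 <= h x) -> 0 <= a -> 0 <= b ->
  (\int[P]_x (h x)%:E = e%:E -> \int[P]_x (a * h x + b)%:E = (a * e + b)%:E)%E.
Proof.
move=> mh h0 a0 b0 int_h.
under eq_integral do rewrite EFinD EFinM.
rewrite ge0_integralD //; first last.
- by apply/measurable_EFinP; apply: measurable_funM => //; exact: measurable_cst.
- by move=> x _; rewrite lee_fin mulr_ge0.
rewrite ge0_integralZl //; first last.
- by move=> x _; rewrite lee_fin.
- exact/measurable_EFinP.
by rewrite int_h integral_cst //= probability_setT mule1.
Qed.

End probability_integral.

Section couplings.
Context {R : realType} {N : nat}.
Implicit Types (mu : probability (N.-tuple R) R)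
  (g : probability (N.-tuple R * N.-tuple R)%type R) (G : N.-tuple R -> R).

Lemma perm_invariant_integral mu G (s : 'S_N) :
  perm_invariant mu -> measurable_fun setT G -> (exists M : R, forall x, `|G x| <= M) ->
  (\int[mu]_x (G (Qperm s x))%:E = \int[mu]_x (G x)%:E)%E.
Proof.
by move=> mu_inv mG bG; have [_ ->] := mu_inv s _ (bounded_probability_integrable mu mG bG).
Qed.

Lemma coupling_gap_le mu1 mu2 g G :
  is_coupling mu1 mu2 g -> measurable_fun setT G -> (exists M : R, forall x, `|G x| <= M) ->
  (`|\int[mu1]_x (G x)%:E - \int[mu2]_x (G x)%:E| <=
   \int[g]_z `|G z.1 - G z.2|%:E)%E.
Proof.
move=> [g1 g2] mG [M bG].
have marginal (phi : N.-tuple R * N.-tuple R -> N.-tuple R) mu :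
    measurable_fun setT phi -> pushforward g phi = mu ->
    (\int[mu]_x (G x)%:E = \int[g]_z (G (phi z))%:E)%E.
  move=> mphi gmu; transitivity (\int[pushforward g phi]_x (G x)%:E)%E.
    by apply: eq_measure_integral => A _ _; exact: (esym (congr1 (fun m => m A) gmu)).
  by rewrite integral_pushforward_bounded //; exists M.
have mGi (phi : N.-tuple R * N.-tuple R -> N.-tuple R) :
    measurable_fun setT phi -> measurable_fun setT (G \o phi).
  by move=> mphi; exact: measurableT_comp.
rewrite (marginal fst) // (marginal snd) // -integralB //; last 2 first.
- apply: (bounded_probability_integrable _ (mGi _ measurable_fst)).
  by exists M => z; exact: bG.
- apply: (bounded_probability_integrable _ (mGi _ measurable_snd)).
  by exists M => z; exact: bG.
apply: le_abse_integral => //; apply/measurable_EFinP.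
exact: measurable_funB (mGi _ measurable_fst) (mGi _ measurable_snd).
Qed.

End couplings.

Section deviations.
Context {R : realType} {N : nat}.
Variable p : R.
Implicit Types (z : N.-tuple R * N.-tuple R) (I : {set 'I_N}) (s : 'S_N).

Definition wp_cost z : R := N%:R^-1 * \sum_(i < N) `|tnth z.1 i - tnth z.2 i| `^ p.

Definition perm_dev I s z : R :=
  \sum_(j < #|I|)
    `|tnth z.1 ((s^-1)%g (enum_val j)) - tnth z.2 ((s^-1)%g (enum_val j))| `^ p.

Lemma PI_card0 I (x y : N.-tuple R) : #|I| = 0%N -> PI I x = PI I y.
Proof. by move=> I0; apply: eq_from_tnth => -[j j_lt]; exfalso; rewrite I0 in j_lt. Qed.

Lemma pdist_PI_Qperm I s z :
  pdist p (PI I (Qperm s z.1)) (PI I (Qperm s z.2)) = perm_dev I s z `^ p^-1.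
Proof. by rewrite /pdist; congr (_ `^ _); apply: eq_bigr => j _; rewrite !tnth_mktuple. Qed.

Lemma perm_dev_ge0 I s z : 0 <= perm_dev I s z.
Proof. by apply: sumr_ge0 => j _; exact: powR_ge0. Qed.

Lemma wp_cost_ge0 z : 0 <= wp_cost z.
Proof. by rewrite mulr_ge0 ?invr_ge0 // sumr_ge0 // => i _; exact: powR_ge0. Qed.

Lemma sum_perm_dev I z :
  \sum_s perm_dev I s z = #|'S_N|%:R * (#|I|%:R * wp_cost z).
Proof.
rewrite exchange_big /=.
under eq_bigr do rewrite (sum_perm_inv_eval (fun i => `|tnth z.1 i - tnth z.2 i| `^ p)).
by rewrite sumr_const !card_ord -[_ *+ #|I|]mulr_natr /wp_cost; ring.
Qed.

Lemma measurable_perm_dev I s : measurable_fun setT (perm_dev I s).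
Proof.
by apply: measurable_sum_powR_dist => j;
  apply: measurableT_comp (measurable_tnth _) _; [exact: measurable_fst | exact: measurable_snd].
Qed.

Lemma measurable_wp_cost : measurable_fun setT wp_cost.
Proof.
apply: measurable_funM; first exact: measurable_cst.
by apply: measurable_sum_powR_dist => i;
  apply: measurableT_comp (measurable_tnth _) _; [exact: measurable_fst | exact: measurable_snd].
Qed.

Lemma sum_integral_root_tangent (g : probability (N.-tuple R * N.-tuple R)%type R) I l e :
  1 <= p -> 0 < l ->
  (\int[g]_z (wp_cost z)%:E = e%:E ->
  \sum_s \int[g]_z (root_tangent p l (perm_dev I s z))%:E =
    (#|'S_N|%:R * root_tangent p l (#|I|%:R * e))%:E)%E.
Proof.
move=> p1 l0 int_cost; have p0 : 0 < p by apply: lt_le_trans p1.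
rewrite -(ge0_integral_sum g measurableT
    (f := fun s z => (root_tangent p l (perm_dev I s z))%:E)); first last.
- by move=> s z _; rewrite lee_fin root_tangent_ge0 ?perm_dev_ge0.
- by move=> s; apply/measurable_EFinP; apply: measurable_root_tangent; exact: measurable_perm_dev.
under eq_integral do rewrite sumEFin (sum_root_tangent _ _ (sum_perm_dev _ _)).
pose a := #|'S_N|%:R * l `^ p^-1 * #|I|%:R / (p * l).
pose b := #|'S_N|%:R * l `^ p^-1 * (1 - p^-1).
have affine c : #|'S_N|%:R * root_tangent p l (#|I|%:R * c) = a * c + b.
  by rewrite /root_tangent /a /b; ring.
under eq_integral do rewrite affine.
rewrite (ge0_integral_affine measurable_wp_cost wp_cost_ge0 _ _ int_cost) ?affine //.
  by rewrite /a !mulr_ge0 ?powR_ge0 ?invr_ge0 ?mulr_ge0 // ltW.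
by rewrite /b !mulr_ge0 ?powR_ge0 // subr_ge0 invf_le1.
Qed.

End deviations.

Section marginal_gap.
Context {R : realType} {N : nat}.
Variables (p : R) (mu1 mu2 : probability (N.-tuple R) R) (I : {set 'I_N})
  (f : #|I|.-tuple R -> R).
Hypotheses (p1 : 1 <= p) (mu1_inv : perm_invariant mu1) (mu2_inv : perm_invariant mu2)
  (f_bounded : exists M : R, forall x, `|f x| <= M) (f_lip : lipschitz1_p p f).

Let mfPI : measurable_fun setT (fun x : N.-tuple R => f (PI I x)).
Proof.
have mf := lipschitz1_p_measurable (lt_le_trans ltr01 p1) f_lip.
exact: (measurableT_comp mf (@measurable_PI _ _ I)).
Qed.

Let bfPI : exists M : R, forall x : N.-tuple R, `|f (PI I x)| <= M.
Proof. by case: f_bounded => M bM; exists M. Qed.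

Lemma abse_marginal_gap :
  (`|\int[mu1]_x (f (PI I x))%:E - \int[mu2]_x (f (PI I x))%:E| =
   `|fine (\int[mu1]_x (f (PI I x))%:E) - fine (\int[mu2]_x (f (PI I x))%:E)|%:E)%E.
Proof.
have fin_int (mu : probability (N.-tuple R) R) :
    (\int[mu]_x (f (PI I x))%:E)%E \is a fin_num.
  exact: bounded_integral_fin_num mfPI bfPI.
move: (fin_int mu1) (fin_int mu2).
by case: (\int[mu1]_x _)%E (\int[mu2]_x _)%E => [a| |] [b| |].
Qed.

Lemma marginal_gap_le_root_tangent g (s : 'S_N) l :
  is_coupling mu1 mu2 g -> 0 < l ->
  (`|\int[mu1]_x (f (PI I x))%:E - \int[mu2]_x (f (PI I x))%:E| <=
   \int[g]_z (root_tangent p l (perm_dev p I s z))%:E)%E.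
Proof.
move=> g_coupling l0.
have mfs : measurable_fun setT (fun x => f (PI I (Qperm s x))).
  exact: (measurableT_comp mfPI (@measurable_Qperm _ _ s)).
have bfs : exists M : R, forall x, `|f (PI I (Qperm s x))| <= M.
  by case: bfPI => M bM; exists M.
rewrite -!(perm_invariant_integral (G := fun x => f (PI I x)) s _ mfPI bfPI) //.
apply: le_trans (coupling_gap_le g_coupling mfs bfs) _.
apply: ge0_le_integral => //.
- apply/measurable_EFinP; apply: measurableT_comp => //.
  exact: measurable_funB (measurableT_comp mfs measurable_fst)
                         (measurableT_comp mfs measurable_snd).
- by apply/measurable_EFinP; apply: measurable_root_tangent; exact: measurable_perm_dev.
move=> z _; rewrite lee_fin; apply: le_trans (f_lip _ _) _.
by rewrite pdist_PI_Qperm powR_inv_le_root_tangent ?perm_dev_ge0.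
Qed.

Lemma marginal_gap_powR_le_cost g : is_coupling mu1 mu2 g -> (0 < #|I|)%N ->
  ((`|fine (\int[mu1]_x (f (PI I x))%:E) - fine (\int[mu2]_x (f (PI I x))%:E)| `^ p)%:E <=
   #|I|%:R%:E * \int[g]_z (wp_cost p z)%:E)%E.
Proof.
move=> g_coupling I0.
have cost_ge0 : (0 <= \int[g]_z (wp_cost p z)%:E)%E.
  by apply: integral_ge0 => z _; rewrite lee_fin wp_cost_ge0.
case cost_e: (\int[g]_z _)%E cost_ge0 => [e| |] // e0; last first.
  by rewrite gt0_muley ?lte_fin ?ltr0n // leey.
rewrite -EFinM lee_fin; apply: powR_le_of_root_tangent => //.
  by rewrite mulr_ge0 // -lee_fin.
move=> l l0.
have S0 : 0 < #|'S_N|%:R :> R by rewrite ltr0n; apply/card_gt0P; exists 1%g.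
rewrite -(ler_pM2l S0) -lee_fin -(sum_integral_root_tangent _ p1 l0 cost_e).
rewrite mulr_natl -sumr_const -sumEFin; apply: lee_sum => s _.
by rewrite -abse_marginal_gap; exact: marginal_gap_le_root_tangent.
Qed.

End marginal_gap.

Lemma le_mul_poweR_ereal_inf (R : realType) (p n K m : R) (S : set (\bar R)) :
  0 < p -> 0 < n -> n <= K -> 0 <= m ->
  (forall c, S c -> (m `^ p)%:E <= n%:E * c)%E ->
  (m%:E <= (K `^ p^-1)%:E * ereal_inf S `^ p^-1)%E.
Proof.
move=> p0 n0 nK m0 bound.
have inf_ge : ((n^-1)%:E * (m `^ p)%:E <= ereal_inf S)%E.
  by apply/ereal_infP => c Sc; rewrite lee_pdivrMl // bound.
have inf0 : (0 <= ereal_inf S)%E.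
  by apply: le_trans inf_ge; rewrite -EFinM lee_fin mulr_ge0 ?invr_ge0 ?powR_ge0 ?(ltW n0).
have K0 : 0 <= K by apply: le_trans nK; exact: ltW.
have -> : m%:E = ((m `^ p)%:E `^ p^-1)%E.
  by rewrite poweR_EFin -powRrM mulfV ?gt_eqF // powRr1.
rewrite -[(K `^ _)%:E]poweR_EFin -poweRM ?lee_fin //.
apply: gt0_ler_poweR; rewrite ?invr_ge0 ?(ltW p0) // ?in_itv /= ?leey ?andbT.
- by rewrite lee_fin powR_ge0.
- by rewrite mule_ge0.
apply: le_trans (lee_wpmul2r inf0 (_ : n%:E <= K%:E)%E); last by rewrite lee_fin.
by rewrite -lee_pdivrMl.
Qed.

Theorem lemma2p3 (R : realType) (p : R) (N : nat)
    (mu1 mu2 : probability (N.-tuple R) R) (I : {set 'I_N})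
    (f : #|I|.-tuple R -> R) :
  1 <= p ->
  perm_invariant mu1 -> perm_invariant mu2 ->
  finite_pmoment p mu1 -> finite_pmoment p mu2 ->
  (#|I| < N)%N ->
  (exists M : R, forall x, `|f x| <= M) ->
  lipschitz1_p p f ->
  (`| \int[mu1]_x (f (PI I x))%:E - \int[mu2]_x (f (PI I x))%:E |
     <= ((#|I|%:R / (1 - #|I|%:R / N%:R)) `^ p^-1)%:E * wp p mu1 mu2)%E.
Proof.
move=> p1 mu1_inv mu2_inv _ _ IN f_bounded f_lip.
have p0 : 0 < p by apply: lt_le_trans p1.
have [I0|I_gt0] := posnP #|I|.
  have int_const (mu : probability (N.-tuple R) R) :
      (\int[mu]_x (f (PI I x))%:E = (f (PI I [tuple 0 | _ < N]))%:E)%E.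
    under eq_integral do rewrite (PI_card0 _ [tuple 0 | _ < N] I0).
    by rewrite integral_cst //= probability_setT mule1.
  by rewrite !int_const subee // abse0 mule_ge0 ?lee_fin ?powR_ge0 ?poweR_ge0.
rewrite (abse_marginal_gap mu1 mu2 p1 f_bounded f_lip).
apply: (le_mul_poweR_ereal_inf (n := #|I|%:R)) => //.
- by rewrite ltr0n.
- have N0 : 0 < N%:R :> R by rewrite ltr0n; apply: leq_ltn_trans IN.
  have IN' : #|I|%:R / N%:R < 1 :> R by rewrite ltr_pdivrMr // mul1r ltr_nat.
  rewrite ler_pdivlMr ?subr_gt0 // ler_piMr // lerBlDr lerDl divr_ge0 //.
by move=> _ [g g_coupling <-]; exact: marginal_gap_powR_le_cost.
Qed.
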